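(* Let $f:[0,1]\to\mathbb{R}$ with $f(0),f(1)\in\mathbb{Z}$ and let $n\in\mathbb{N}_+$. If $n\ge 3$, let also $\phi_n:[0,1]\to\mathbb{R}$ satisfy \[ \phi_n\left(\frac{k+1}{n}\right)-\phi_n\left(\frac{k}{n}\right)\ge \binom{n}{k+1}^{-1},\quad k=1,\dots,n-2. \] If $f$ is monotone increasing on $[0,1/n]$ and on $[1-1/n,1]$, and (when $n\ge3$) $f(x)-\phi_n(x)$ is monotone increasing on $[1/n,1-1/n]$, then $\widetilde{B}_n(f)$ is monotone increasing on $[0,1]$.
   Context: For $n\in\mathbb{N}_+$ and $f:[0,1]\to\mathbb{R}$, $\widetilde{B}_n(f)(x):=\sum_{k=0}^n \left[f\left(\frac{k}{n}\right)\binom{n}{k}\right]x^k(1-x)^{n-k}$, where $[\alpha]$ is the largest integer $\le\alpha$. Monotone increasing is meant in the non-strict sense. *)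

From mathcomp Require Import all_boot all_order all_algebra.
From mathcomp Require Import reals.
Set Implicit Arguments. Unset Strict Implicit. Unset Printing Implicit Defensive.
Import Order.TTheory GRing.Theory Num.Theory.
Local Open Scope ring_scope.

Definition Btilde (R : realType) (n : nat) (f : R -> R) (x : R) : R :=
  \sum_(k < n.+1)
     (Num.floor (f (k%:R / n%:R) * ('C(n, k))%:R))%:~R
       * x ^+ k * (1 - x) ^+ (n - k).

Definition mono_incr_on (R : realType) (a b : R) (g : R -> R) : Prop :=
  forall x y, a <= x -> x <= y -> y <= b -> g x <= g y.

(** The modified operator is an ordinary Bernstein polynomial whose k-th
    coefficient is f(k/n) rounded down to the grid C(n,k)^-1 Z, and a
    Bernstein polynomial with nondecreasing coefficients is nondecreasing on
    [0,1].  The extreme coefficients are f(0) and f(1) exactly (they are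
    integers and C(n,0) = C(n,n) = 1), and they are compared with their
    neighbours by monotonicity of f near the endpoints.  In the middle, rounding
    loses less than C(n,k+1)^-1, which the increment of phi compensates since
    f - phi is nondecreasing there. *)

From mathcomp Require Import all_boot all_order all_algebra.
From mathcomp Require Import reals.
From mathcomp Require Import ring lra zify.
Import Order.TTheory GRing.Theory Num.Theory.
Local Open Scope ring_scope.

Definition bernstein {R : comPzRingType} (n : nat) (c : nat -> R) (x : R) : R :=
  \sum_(k < n.+1) c k * ('C(n, k))%:R * x ^+ k * (1 - x) ^+ (n - k).

Lemma bernstein0 (R : comPzRingType) (c : nat -> R) x : bernstein 0 c x = c 0%N.
Proof. by rewrite /bernstein big_ord1 /= !expr0 !mulr1. Qed.

Lemma bernsteinS (R : comPzRingType) n (c : nat -> R) x :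
  bernstein n.+1 c x
  = (1 - x) * bernstein n c x + x * bernstein n (fun k => c k.+1) x.
Proof.
rewrite /bernstein big_ord_recl /=.
have pascal (i : 'I_n.+1) :
    c (bump 0 i) * ('C(n.+1, bump 0 i))%:R * x ^+ bump 0 i
      * (1 - x) ^+ (n.+1 - bump 0 i)
    = c i.+1 * ('C(n, i.+1))%:R * x ^+ i.+1 * (1 - x) ^+ (n - i)
      + x * (c i.+1 * ('C(n, i))%:R * x ^+ i * (1 - x) ^+ (n - i)).
  by rewrite /bump /= add1n binS natrD subSS exprS; ring.
rewrite (eq_bigr _ (fun i _ => pascal i)) big_split /= -mulr_sumr.
rewrite big_ord_recr /= (bin_small (ltnSn n)) mulr0 !mul0r addr0.
rewrite [in RHS]big_ord_recl /= mulrDr addrA; congr (_ + _ + _).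
  by rewrite !bin0 !subn0 exprS; ring.
rewrite mulr_sumr; apply: eq_bigr => i _.
by rewrite -(subnSK (ltn_ord i)) [(1 - x) ^+ _.+1]exprS; ring.
Qed.

Lemma ler_bernstein (R : realDomainType) n (c d : nat -> R) x :
  (forall k, (k <= n)%N -> c k <= d k) -> 0 <= x <= 1 ->
  bernstein n c x <= bernstein n d x.
Proof.
move=> le_cd /andP[x_ge0 x_le1]; apply: ler_sum => k _.
have wx : 0 <= x ^+ k * (1 - x) ^+ (n - k).
  by rewrite mulr_ge0 ?exprn_ge0 ?subr_ge0.
rewrite -!mulrA ler_wpM2r ?(mulr_ge0 (ler0n _ _) wx) //.
by apply: le_cd; rewrite -ltnS.
Qed.

Lemma bernstein_nondecreasing (R : realDomainType) n (c : nat -> R) :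
  (forall k, (k < n)%N -> c k <= c k.+1) ->
  {in `[0, 1] &, {homo bernstein n c : x y / x <= y}}.
Proof.
elim: n c => [|n IH] c c_incr x y; first by rewrite !bernstein0.
rewrite !in_itv /= => /andP[x_ge0 x_le1] /andP[y_ge0 y_le1] le_xy.
set c' := fun k => c k.+1.
have IHc := IH c (fun k lt_kn => c_incr k (ltnW lt_kn)) x y.
have IHc' := IH c' (fun k lt_kn => c_incr k.+1 lt_kn) x y.
have le_cc' : bernstein n c x <= bernstein n c' x.
  by apply: ler_bernstein; [move=> k; apply: c_incr | rewrite x_ge0].
rewrite -subr_ge0.
have -> : bernstein n.+1 c y - bernstein n.+1 c x
    = (1 - y) * (bernstein n c y - bernstein n c x)
      + y * (bernstein n c' y - bernstein n c' x)
      + (y - x) * (bernstein n c' x - bernstein n c x).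
  by rewrite !bernsteinS; ring.
by rewrite !addr_ge0 ?mulr_ge0 ?subr_ge0 ?IHc ?IHc' ?in_itv /= ?x_ge0 ?y_ge0.
Qed.

Definition floor_grid {R : archiRealFieldType} (C v : R) : R :=
  (Num.floor (v * C))%:~R / C.

Section FloorGrid.
Variable R : archiRealFieldType.
Implicit Types C v w : R.

Lemma floor_grid_le C v : 0 < C -> floor_grid C v <= v.
Proof. by move=> C_gt0; rewrite ler_pdivrMr // floor_le. Qed.

Lemma floor_grid_gt C v : 0 < C -> v - C^-1 < floor_grid C v.
Proof.
move=> C_gt0; rewrite ltr_pdivlMr // mulrBl mulVf ?gt_eqF //.
by have := floorD1_gt (v * C); rewrite intrD; lra.
Qed.

Lemma floor_grid_ge_int v w (p : nat) : v \is a Num.int -> (0 < p)%N ->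
  v <= w -> v <= floor_grid p%:R w.
Proof.
move=> /intrP[m ->] p_gt0 le_mw; rewrite ler_pdivlMr ?ltr0n //.
rewrite -[p%:R]/((p%:Z)%:~R) -intrM ler_int floor_ge_int intrM /=.
by rewrite ler_wpM2r ?ler0n.
Qed.

Lemma floor_grid1 v : v \is a Num.int -> floor_grid 1 v = v.
Proof. by move=> v_int; rewrite /floor_grid mulr1 divr1 floorK. Qed.

End FloorGrid.

Definition btilde_coef {R : realType} (n : nat) (f : R -> R) (k : nat) : R :=
  floor_grid ('C(n, k))%:R (f (k%:R / n%:R)).

Lemma BtildeE (R : realType) n (f : R -> R) x :
  Btilde n f x = bernstein n (btilde_coef n f) x.
Proof.
apply: eq_bigr => k _; rewrite /btilde_coef /floor_grid divfK //.
by rewrite pnatr_eq0 -lt0n bin_gt0 -ltnS.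
Qed.

Lemma ler_natr_div (R : numFieldType) (n a b : nat) :
  (a <= b)%N -> a%:R / n%:R <= b%:R / n%:R :> R.
Proof. by move=> le_ab; rewrite ler_wpM2r ?invr_ge0 ?ler0n ?ler_nat. Qed.

Lemma subr_invn (R : numFieldType) (n : nat) :
  (0 < n)%N -> 1 - n%:R^-1 = n.-1%:R / n%:R :> R.
Proof.
by case: n => // n _; rewrite -natr1 /=; field; rewrite natr1 pnatr_eq0.
Qed.

Section BtildeCoefficients.
Variables (R : realType) (f phi : R -> R) (n : nat).
Hypothesis n_gt0 : (0 < n)%N.
Hypothesis f0_int : f 0 \is a Num.int.
Hypothesis f1_int : f 1 \is a Num.int.
Hypothesis phi_incr : (3 <= n)%N -> forall k : nat, (1 <= k)%N ->
  (k <= n - 2)%N ->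
  phi (k.+1%:R / n%:R) - phi (k%:R / n%:R) >= (('C(n, k.+1))%:R)^-1.
Hypothesis f_incr_lo : mono_incr_on 0 (n%:R^-1) f.
Hypothesis f_incr_hi : mono_incr_on (1 - n%:R^-1) 1 f.
Hypothesis f_sub_phi_incr : (3 <= n)%N ->
  mono_incr_on (n%:R^-1) (1 - n%:R^-1) (fun x => f x - phi x).

Local Notation c := (btilde_coef n f).

Let n_neq0 : n%:R != 0 :> R. Proof. by rewrite pnatr_eq0 -lt0n. Qed.

Let binr_gt0 k : (k <= n)%N -> 0 < ('C(n, k))%:R :> R.
Proof. by move=> le_kn; rewrite ltr0n bin_gt0. Qed.

Lemma btilde_coef_le {k} : (k <= n)%N -> c k <= f (k%:R / n%:R).
Proof. by move=> le_kn; apply/floor_grid_le/binr_gt0. Qed.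

Lemma btilde_coef0 : c 0 = f 0.
Proof. by rewrite /btilde_coef bin0 mul0r floor_grid1. Qed.

Lemma btilde_coefn : c n = f 1.
Proof. by rewrite /btilde_coef binn divff // floor_grid1. Qed.

Lemma btilde_coef_incr0 : c 0 <= c 1.
Proof.
rewrite btilde_coef0 /btilde_coef bin1; apply: floor_grid_ge_int => //.
by apply: f_incr_lo; rewrite ?div1r ?invr_ge0.
Qed.

Lemma btilde_coef_incr_last : c n.-1 <= c n.
Proof.
rewrite btilde_coefn; apply: le_trans (btilde_coef_le (leq_pred n)) _.
apply: f_incr_hi; rewrite ?subr_invn //.
by rewrite -[X in _ <= X](divff n_neq0) ler_natr_div ?leq_pred.
Qed.

Lemma btilde_coef_incr_mid k : (3 <= n)%N -> (1 <= k)%N -> (k <= n - 2)%N ->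
  c k <= c k.+1.
Proof.
move=> n_ge3 k_ge1 le_k_n2.
have lo : c k <= f (k%:R / n%:R) by apply: btilde_coef_le; lia.
have hi : f (k.+1%:R / n%:R) - ('C(n, k.+1))%:R^-1 < c k.+1.
  by apply/floor_grid_gt/binr_gt0; lia.
have f_sub_phi_le : f (k%:R / n%:R) - phi (k%:R / n%:R)
                    <= f (k.+1%:R / n%:R) - phi (k.+1%:R / n%:R).
  apply: f_sub_phi_incr => //.
  - by rewrite ler_pdivlMr ?ltr0n // mulVf // ler1n.
  - by apply: ler_natr_div.
  - by rewrite subr_invn //; apply: ler_natr_div; lia.
have := phi_incr n_ge3 _ k_ge1 le_k_n2; lra.
Qed.

Lemma btilde_coef_nondecreasing k : (k < n)%N -> c k <= c k.+1.
Proof.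
case: k => [_ | k lt_k1_n]; first exact: btilde_coef_incr0.
have [lt_k2_n | le_n_k2] := ltnP k.+2 n.
  by apply: btilde_coef_incr_mid; lia.
have -> : k.+1 = n.-1 by lia.
by rewrite prednK //; apply: btilde_coef_incr_last.
Qed.

End BtildeCoefficients.

Theorem proposition2p2 (R : realType) (f phi : R -> R) (n : nat) :
  (0 < n)%N ->
  f 0 \is a Num.int -> f 1 \is a Num.int ->
  ((3 <= n)%N -> forall k : nat, (1 <= k)%N -> (k <= n - 2)%N ->
     phi (k.+1%:R / n%:R) - phi (k%:R / n%:R) >= (('C(n, k.+1))%:R)^-1) ->
  mono_incr_on 0 (n%:R^-1) f ->
  mono_incr_on (1 - n%:R^-1) 1 f ->
  ((3 <= n)%N -> mono_incr_on (n%:R^-1) (1 - n%:R^-1) (fun x => f x - phi x)) ->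
  mono_incr_on 0 1 (Btilde n f).
Proof.
move=> n_gt0 f0_int f1_int phi_incr f_incr_lo f_incr_hi f_sub_phi_incr.
move=> x y x_ge0 le_xy y_le1; rewrite !BtildeE.
apply: bernstein_nondecreasing.
- by move=> k; apply: (@btilde_coef_nondecreasing _ _ phi).
- by rewrite in_itv /= x_ge0 (le_trans le_xy).
- by rewrite in_itv /= y_le1 (le_trans x_ge0).
- exact: le_xy.
Qed.
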